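(* Under the standing assumptions below, let $i\in P$ with $M_i\neq 0$. Then there exists $w\in P$ with $w\le i$ such that $D_w\subsetneq M_w$, i.e. $M_w$ contains an indecomposable element.
   Context: Standing assumptions: $R$ is a principal ideal domain; $P$ is a lattice with a compatible abelian group structure ($(P,+,0)$ abelian group, $a\le b\Rightarrow a+c\le b+c$). $U_0=\{s\in P:s\ge 0\}$, $R[U_0]$ the monoid ring (finite sums $\sum c_st^s$, $c_s\in R$), graded by $\deg(ct^s)=s$. $M=\bigoplus_{a\in P}M_a$ is a $P$-graded $R[U_0]$-module (persistence module) that is graded projective, with each $M_a$ a finitely generated $R$-module. For $r\in P$, $D_r=\sum_{q<r}t^{\,r-q}M_q\subseteq M_r$ (sum of the images of the structure maps $M_q\to M_r$ over all $q<r$). An element $x\in M_i$ is decomposable if $x\in D_i$ and indecomposable if $x\in M_i\setminus D_i$. *)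

From HB Require Import structures.
From mathcomp Require Import all_boot all_order all_algebra.
Set Implicit Arguments. Unset Strict Implicit. Unset Printing Implicit Defensive.
Import Order.TTheory GRing.Theory.
Local Open Scope ring_scope.

(* Abelian group structure (+, -, 0) on a lattice P, compatible with the order:
   a <= b -> a + c <= b + c.  (Stated as explicit data + axioms, since MathComp
   has no ready-made "lattice-ordered abelian group" structure.) *)
Record lattice_group d (P : latticeType d) := LatticeGroup {
  lg_add : P -> P -> P;
  lg_opp : P -> P;
  lg_zero : P;
  lg_addA : forall a b c, lg_add a (lg_add b c) = lg_add (lg_add a b) c;
  lg_addC : forall a b, lg_add a b = lg_add b a;
  lg_add0 : forall a, lg_add lg_zero a = a;
  lg_addN : forall a, lg_add (lg_opp a) a = lg_zero;
  lg_compat : forall a b c, (a <= b)%O -> (lg_add a c <= lg_add b c)%O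
}.

Definition is_ideal (R : comPzRingType) (I : R -> Prop) : Prop :=
  I 0 /\ (forall x y, I x -> I y -> I (x + y)) /\ (forall r x, I x -> I (r * x)).

Definition is_pid (R : idomainType) : Prop :=
  forall I : R -> Prop, is_ideal I -> exists a : R, forall x, I x <-> exists r, x = r * a.

Definition rlinear (R : pzRingType) (U V : lmodType R) (f : U -> V) : Prop :=
  forall (k : R) (x y : U), f (k *: x + y) = k *: f x + f y.

Definition fin_gen (R : pzRingType) (V : lmodType R) : Prop :=
  exists (n : nat) (g : 'I_n -> V), forall x : V,
    exists c : 'I_n -> R, x = \sum_(k < n) c k *: g k.

(* A P-graded R[U_0]-module (persistence module): R-modules M_a (a : P) with
   structure maps M_a -> M_b for a <= b (multiplication by t^(b-a)),
   R-linear, with identity at a = a and compatible with composition. *)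
Record pmod (R : pzRingType) d (P : porderType d) := PMod {
  obj : P -> lmodType R;
  mor : forall a b : P, (a <= b)%O -> obj a -> obj b;
  mor_lin : forall a b (h : (a <= b)%O), rlinear (mor h);
  mor_id : forall a (h : (a <= a)%O) (x : obj a), mor h x = x;
  mor_comp : forall a b c (hab : (a <= b)%O) (hbc : (b <= c)%O) (hac : (a <= c)%O)
               (x : obj a), mor hbc (mor hab x) = mor hac x
}.

Definition pmorph (R : pzRingType) d (P : porderType d) (M N : pmod R P)
  (f : forall a, obj M a -> obj N a) : Prop :=
  (forall a, rlinear (f a)) /\
  (forall a b (h : (a <= b)%O) (x : obj M a), f b (@mor _ _ _ M a b h x) = @mor _ _ _ N a b h (f a x)).

Definition graded_projective (R : pzRingType) d (P : porderType d) (M : pmod R P) : Prop :=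
  forall (N N' : pmod R P) (g : forall a, obj N a -> obj N' a)
         (f : forall a, obj M a -> obj N' a),
    pmorph g -> (forall a (y : obj N' a), exists x, g a x = y) -> pmorph f ->
    exists h : forall a, obj M a -> obj N a,
      pmorph h /\ forall a (x : obj M a), g a (h a x) = f a x.

(* x in D_r = sum_{q<r} t^(r-q) M_q : a finite sum of images of structure maps
   from strictly smaller degrees. *)
Definition in_D (R : pzRingType) d (P : porderType d) (M : pmod R P) (r : P)
  (x : obj M r) : Prop :=
  exists (n : nat) (q : 'I_n -> P) (hq : forall k, (q k < r)%O)
         (y : forall k, obj M (q k)),
    x = \sum_(k < n) @mor _ _ _ M (q k) r (ltW (hq k)) (y k).
Arguments in_D {R d P} M {r} x.

Definition decomposable (R : pzRingType) d (P : porderType d) (M : pmod R P) (r : P)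
  (x : obj M r) : Prop := in_D M x.
Arguments decomposable {R d P} M {r} x.

Definition indecomposable (R : pzRingType) d (P : porderType d) (M : pmod R P) (r : P)
  (x : obj M r) : Prop := ~ in_D M x.
Arguments indecomposable {R d P} M {r} x.
Arguments graded_projective {R d P} M.

(* M is a retract of the free graded module F whose degree-a part has a basis
   indexed by the pairs (q, m) with q <= a and m in M_q, the pair (q, m) being
   sent to the image of m in M_a; projectivity yields a graded section h of this
   cover.  If every element of M_w is decomposable for all w <= i, then h maps
   M_w into the span of the generators of degree < w.  Writing x in M_i as the
   image of h x and applying h again then shows that every generator in the
   finite support of h x lies strictly below another generator of that support,
   so the support is empty and x = 0. *)

From HB Require Import structures.
From mathcomp Require Import all_boot all_order all_algebra.
From mathcomp Require Import finmap.
From mathcomp.multinomials Require Import monalg.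
From Stdlib Require Import Classical.
Import Order.TTheory GRing.Theory.

Set Implicit Arguments.
Unset Strict Implicit.
Unset Printing Implicit Defensive.

Lemma has_maximal_in_seq d (P : porderType d) (T : eqType) (f : T -> P)
    (s : seq T) (x0 : T) :
  x0 \in s -> exists2 x, x \in s & {in s, forall y, ~~ (f x < f y)%O}.
Proof.
case: s => // a s _; elim: s a => [|b s IHs] a.
  by exists a; rewrite ?mem_head // => y; rewrite inE => /eqP ->; rewrite ltxx.
have [m ms m_max] := IHs b.
have [am | Nam] := boolP (f m < f a)%O.
  exists a; first exact: mem_head.
  move=> y; rewrite inE => /predU1P [-> | ys]; first by rewrite ltxx.
  by apply: contra (m_max y ys); exact: lt_trans.
exists m; first by rewrite inE ms orbT.
by move=> y; rewrite inE => /predU1P [-> | ys] //; exact: m_max.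
Qed.

Local Open Scope ring_scope.

Lemma msupp_sum (K : choiceType) (G : zmodType) (I : eqType) (r : seq I)
    (F : I -> {malg G[K]}) (k : K) :
  k \in msupp (\sum_(j <- r) F j) -> exists2 j, j \in r & k \in msupp (F j).
Proof.
move=> kF; apply/hasP; move: kF; apply: contraLR => /hasPn Nsupp.
rewrite -mcoeff_eq0 raddf_sum; apply/eqP/big1_seq => j /andP [_ jr].
by apply/eqP; rewrite mcoeff_eq0 Nsupp.
Qed.

Section RLinear.
Variables (R : pzRingType) (U V : lmodType R) (f : U -> V).
Hypothesis f_lin : rlinear f.

Lemma rlinearD x y : f (x + y) = f x + f y.
Proof. by rewrite -[x in LHS]scale1r f_lin scale1r. Qed.

Lemma rlinear0 : f 0 = 0.
Proof. by apply: (@addrI _ (f 0)); rewrite -rlinearD !addr0. Qed.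

Lemma rlinearZ c x : f (c *: x) = c *: f x.
Proof. by rewrite -[c *: x]addr0 f_lin rlinear0 addr0. Qed.

Lemma rlinear_sum (I : Type) (r : seq I) (Q : pred I) (F : I -> U) :
  f (\sum_(j <- r | Q j) F j) = \sum_(j <- r | Q j) f (F j).
Proof. exact: (big_morph f rlinearD rlinear0). Qed.

End RLinear.

Section GradedProjective.
Variables (R : pzRingType) (d : Order.disp_t) (P : porderType d).

Lemma pmorph_id (M : pmod R P) : pmorph (fun a (x : obj M a) => x).
Proof. by []. Qed.

Lemma graded_projective_split (M N : pmod R P)
    (g : forall a, obj N a -> obj M a) :
  graded_projective M -> pmorph g -> (forall a (y : obj M a), exists x, g a x = y) ->
  exists h : forall a, obj M a -> obj N a,
    pmorph h /\ forall a (x : obj M a), g a (h a x) = x.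
Proof. by move=> M_proj g_morph g_surj; apply: M_proj g_morph g_surj (pmorph_id M). Qed.

End GradedProjective.

Section FreeCover.
Variables (R : nzRingType) (d : Order.disp_t) (P : porderType d) (M : pmod R P).

Definition generator := {q : P & obj M q}.
Definition generator_below (a : P) : choiceType := {k : generator | (tag k <= a)%O}.
Local Notation free a := {malg R[generator_below a]}.

Definition widen_below a b (h : (a <= b)%O) (k : generator_below a) :
  generator_below b := exist _ (val k) (le_trans (valP k) h).

(* [free_mor] and [cover] are locked: otherwise every failed rewrite match
   unfolds their sums over [msupp], which is prohibitively slow. *)
Definition free_mor_def a b (h : (a <= b)%O) (n : free a) : free b :=
  \sum_(k <- msupp n) << n@_k *g widen_below h k >>.
Fact free_mor_key : unit. Proof. by []. Qed.
Definition free_mor := locked_with free_mor_key free_mor_def.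
Canonical free_mor_unlockable := [unlockable fun free_mor].

Lemma mcoeff_free_mor_below a b (h : (a <= b)%O) (n : free a)
    (k0 : generator_below a) (k : generator_below b) :
  val k0 = val k -> (free_mor h n)@_k = n@_k0.
Proof.
move=> k0E; rewrite unlock raddf_sum /= [in RHS](monalgE n) raddf_sum /=.
apply: eq_bigr => k1 _; rewrite !mcoeffU; congr (_ *+ nat_of_bool _).
by rewrite -[LHS](inj_eq val_inj) -[RHS](inj_eq val_inj) k0E.
Qed.

Lemma mcoeff_free_mor_above a b (h : (a <= b)%O) (n : free a) (k : generator_below b) :
  ~~ (tag (val k) <= a)%O -> (free_mor h n)@_k = 0.
Proof.
move=> k_nle; rewrite unlock raddf_sum /= big1 // => k1 _.
rewrite mcoeffU; case: eqP => // k1E.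
by exfalso; move: k_nle; rewrite -k1E (valP k1).
Qed.

Lemma msupp_free_mor a b (h : (a <= b)%O) (n : free a) (k : generator_below b) :
  k \in msupp (free_mor h n) -> exists2 k0, k0 \in msupp n & val k0 = val k.
Proof.
rewrite -mcoeff_neq0; have [k_le | k_nle] := boolP (tag (val k) <= a)%O.
  have k0E : val (exist _ (val k) k_le : generator_below a) = val k by [].
  by rewrite (mcoeff_free_mor_below _ _ k0E) mcoeff_neq0; exists (exist _ (val k) k_le).
by rewrite mcoeff_free_mor_above ?eqxx.
Qed.

Lemma free_mor_lin a b (h : (a <= b)%O) : rlinear (free_mor h).
Proof.
move=> c x y; apply/malgP => k; rewrite mcoeffD mcoeffZ.
have [k_le | k_nle] := boolP (tag (val k) <= a)%O.
  have k0E : val (exist _ (val k) k_le : generator_below a) = val k by [].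
  by rewrite !(mcoeff_free_mor_below _ _ k0E) mcoeffD mcoeffZ.
by rewrite !mcoeff_free_mor_above // mulr0 addr0.
Qed.

Lemma free_mor_id a (h : (a <= a)%O) (n : free a) : free_mor h n = n.
Proof. by apply/malgP => k; rewrite (mcoeff_free_mor_below _ _ (erefl (val k))). Qed.

Lemma free_mor_comp a b c (hab : (a <= b)%O) (hbc : (b <= c)%O) (hac : (a <= c)%O)
    (n : free a) :
  free_mor hbc (free_mor hab n) = free_mor hac n.
Proof.
apply/malgP => k; have [k_le | k_nle] := boolP (tag (val k) <= a)%O.
  pose k0 : generator_below a := exist _ (val k) k_le.
  pose k1 : generator_below b := exist _ (val k) (le_trans k_le hab).
  have k01 : val k0 = val k1 by [].
  have k1E : val k1 = val k by [].
  by rewrite (mcoeff_free_mor_below _ _ k1E) (mcoeff_free_mor_below _ _ k01)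
             (mcoeff_free_mor_below _ _ (etrans k01 k1E)).
rewrite [RHS]mcoeff_free_mor_above //.
have [k_le | k_nle_b] := boolP (tag (val k) <= b)%O; last exact: mcoeff_free_mor_above.
have k1E : val (exist _ (val k) k_le : generator_below b) = val k by [].
by rewrite (mcoeff_free_mor_below _ _ k1E) mcoeff_free_mor_above.
Qed.

Definition free_pmod : pmod R P := PMod free_mor_lin free_mor_id free_mor_comp.

Definition gen_image a (k : generator_below a) : obj M a :=
  mor (valP k) (tagged (val k)).

Lemma gen_image_widen a b (h : (a <= b)%O) (k : generator_below a) :
  gen_image (widen_below h k) = mor h (gen_image k).
Proof. exact/esym/mor_comp. Qed.

Definition cover_def a (n : free a) : obj M a := \sum_(k <- msupp n) n@_k *: gen_image k.
Fact cover_key : unit. Proof. by []. Qed.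
Definition cover := locked_with cover_key cover_def.
Canonical cover_unlockable := [unlockable fun cover].

Lemma coverEw a (n : free a) (S : {fset generator_below a}) :
  (msupp n `<=` S)%fset -> cover n = \sum_(k <- S) n@_k *: gen_image k.
Proof.
move=> nS; rewrite unlock; apply: big_fset_incl => // k _ kNn.
by rewrite mcoeff_outdom // scale0r.
Qed.

Lemma cover_lin a : rlinear (@cover a).
Proof.
move=> c x y; pose S := (msupp x `|` msupp y `|` msupp (c *: x + y))%fset.
rewrite (@coverEw _ (c *: x + y) S) ?fsubsetUr //.
rewrite (@coverEw _ x S); last by rewrite /S -fsetUA fsubsetUl.
rewrite (@coverEw _ y S); last exact: fsubset_trans (fsubsetUr _ _) (fsubsetUl _ _).
rewrite scaler_sumr -big_split; apply: eq_bigr => k _.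
by rewrite mcoeffD mcoeffZ scalerDl scalerA.
Qed.

Lemma coverU a c (k : generator_below a) : cover << c *g k >> = c *: gen_image k.
Proof. by rewrite (coverEw msuppU_le) big_seq_fset1 mcoeffUU. Qed.

Lemma cover_mor a b (h : (a <= b)%O) (n : free a) :
  cover (free_mor h n) = mor h (cover n).
Proof.
rewrite [free_mor]unlock (rlinear_sum (@cover_lin b)) [cover in RHS]unlock.
rewrite (rlinear_sum (mor_lin h)); apply: eq_bigr => k _.
by rewrite coverU (rlinearZ (mor_lin h)) gen_image_widen.
Qed.

Lemma cover_pmorph : pmorph (M := free_pmod) cover.
Proof. by split; [exact: cover_lin | exact: cover_mor]. Qed.

Lemma cover_surj a (x : obj M a) : exists n : free a, cover n = x.
Proof.
exists << (exist _ (existT _ a x) (lexx a) : generator_below a) >>.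
by rewrite coverU scale1r /gen_image mor_id.
Qed.

End FreeCover.

Section SplitCover.
Variables (R : nzRingType) (d : Order.disp_t) (P : porderType d) (M : pmod R P).
Variable h : forall a, obj M a -> {malg R[generator_below M a]}.
Hypothesis h_morph : pmorph (N := free_pmod M) h.
Hypothesis h_split : forall a (x : obj M a), cover (h x) = x.

Lemma split_gen_image a (k : generator_below M a) :
  h (gen_image k) = free_mor (valP k) (h (tagged (val k))).
Proof. exact: h_morph.2. Qed.

Lemma split_expand a (x : obj M a) :
  h x = \sum_(k <- msupp (h x)) (h x)@_k *: free_mor (valP k) (h (tagged (val k))).
Proof.
rewrite -{1}(h_split x) unlock (rlinear_sum (h_morph.1 a)); apply: eq_bigr => k _.
by rewrite (rlinearZ (h_morph.1 a)) split_gen_image.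
Qed.

Lemma split_decomposable_supp w (y : obj M w) (k : generator_below M w) :
  in_D M y -> k \in msupp (h y) -> (tag (val k) < w)%O.
Proof.
case=> n [q [q_lt [z ->]]]; rewrite (rlinear_sum (h_morph.1 w)).
case/msupp_sum => j _; rewrite h_morph.2 => /msupp_free_mor [k0 _ <-].
exact: le_lt_trans (valP k0) (q_lt j).
Qed.

Lemma split_supp_step a (x : obj M a) (k : generator_below M a) :
  k \in msupp (h x) ->
  exists2 k1, k1 \in msupp (h x) &
    exists2 k0, k0 \in msupp (h (tagged (val k1))) & val k0 = val k.
Proof.
rewrite {1}split_expand => /msupp_sum [k1 k1_supp].
by move/(fsubsetP (msuppZ_le _ _))/msupp_free_mor; exists k1.
Qed.

Lemma split_decomposable_below_eq0 i :
  (forall w, (w <= i)%O -> forall y : obj M w, in_D M y) ->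
  forall x : obj M i, h x = 0.
Proof.
move=> decomp x; apply/malgP => k; rewrite mcoeff0; apply/eqP.
rewrite mcoeff_eq0; apply/negP => k_supp.
have [km km_supp km_max] :=
  has_maximal_in_seq (fun k : generator_below M i => tag (val k)) k_supp.
have [k1 k1_supp [k0 k0_supp k0E]] := split_supp_step km_supp.
have := split_decomposable_supp (decomp _ (valP k1) _) k0_supp.
by rewrite k0E; apply/negP/km_max.
Qed.

End SplitCover.

Lemma projective_decomposable_below_eq0 (R : nzRingType) d (P : porderType d)
    (M : pmod R P) (i : P) :
  graded_projective M -> (forall w, (w <= i)%O -> forall y : obj M w, in_D M y) ->
  forall x : obj M i, x = 0.
Proof.
move=> M_proj decomp x.
have [h [h_morph h_split]] :=
  graded_projective_split M_proj (cover_pmorph M) (@cover_surj _ _ _ M).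
by rewrite -(h_split i x) (split_decomposable_below_eq0 h_morph h_split decomp)
  (rlinear0 (@cover_lin _ _ _ M i)).
Qed.

Theorem corollary3p12 (R : idomainType) (R_pid : is_pid R)
  (d : Order.disp_t) (P : latticeType d) (P_group : lattice_group P)
  (M : pmod R P) (M_proj : graded_projective M)
  (M_fg : forall a : P, fin_gen (obj M a))
  (i : P) (M_i_nz : exists x : obj M i, x != 0) :
  exists w : P, (w <= i)%O /\
    ((forall x : obj M w, in_D M x) -> False) /\
    (exists x : obj M w, indecomposable M x).
Proof.
have [x x_nz] := M_i_nz.
have [w not_decomp_below] : exists w, ~ ((w <= i)%O -> forall y : obj M w, in_D M y).
  apply: not_all_ex_not => decomp; move/eqP: x_nz; apply.
  exact: projective_decomposable_below_eq0 M_proj decomp x.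
have [w_le not_decomp] := imply_to_and _ _ not_decomp_below.
have [y y_indec] := not_all_ex_not _ _ not_decomp.
by exists w; split; last split; last exists y.
Qed.
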